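(* Let $C:2^M\to\mathbb{R}_{\ge0}$ be a monotone normalized cost function and $P_C$ its potential function. Then for every allocation $\vec S$, $P_C(\vec S)\le \mathcal H_n\cdot C(\vec S)$, where $\mathcal H_n=\sum_{k=1}^n \frac1k$.
   Context: Setting. $N=\{1,\dots,n\}$ is a set of players and $M_1,\dots,M_n$ are pairwise disjoint finite sets; $M=\bigcup_i M_i$. An allocation is a vector $\vec S=(S_1,\dots,S_n)$ with $S_i\subseteq M_i$, identified with the subset $\bigcup_i S_i$ of $M$. The potential function of a cost function $C$ is $P_C(\vec S)=\sum_{\emptyset\neq I\subseteq N}\frac{C(\bigcup_{i\in I}S_i)}{|I|\binom{n}{|I|}}$. *)

From HB Require Import structures.
From mathcomp Require Import all_boot all_order all_algebra.
Set Implicit Arguments. Unset Strict Implicit. Unset Printing Implicit Defensive.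
Import Order.TTheory GRing.Theory Num.Theory.
Local Open Scope ring_scope.

(* Players are 'I_n. Items form a finite type M; [owner x] is the player i
   with x \in M_i, so the M_i := [set x | owner x == i] are pairwise disjoint
   and cover M. *)

Definition player_items (M : finType) (n : nat) (owner : M -> 'I_n) (i : 'I_n)
  : {set M} := [set x | owner x == i].

Definition is_allocation (M : finType) (n : nat) (owner : M -> 'I_n)
  (S : 'I_n -> {set M}) : Prop :=
  forall i, S i \subset player_items owner i.

(* The allocation identified with the subset \bigcup_i S_i of M. *)
Definition alloc_set (M : finType) (n : nat) (S : 'I_n -> {set M}) : {set M} :=
  \bigcup_(i < n) S i.

Definition cost_monotone (R : realFieldType) (M : finType) (C : {set M} -> R) : Prop :=
  forall A B : {set M}, A \subset B -> C A <= C B.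

Definition cost_normalized (R : realFieldType) (M : finType) (C : {set M} -> R) : Prop :=
  C set0 = 0.

Definition cost_nonneg (R : realFieldType) (M : finType) (C : {set M} -> R) : Prop :=
  forall A : {set M}, 0 <= C A.

Definition potential (R : realFieldType) (M : finType) (n : nat)
  (C : {set M} -> R) (S : 'I_n -> {set M}) : R :=
  \sum_(I : {set 'I_n} | I != set0)
     C (\bigcup_(i in I) S i) / ((#|I| * 'C(n, #|I|))%N)%:R.

Definition harmonic (R : realFieldType) (n : nat) : R :=
  \sum_(1 <= k < n.+1) (k%:R)^-1.

From HB Require Import structures.
From mathcomp Require Import all_boot all_order all_algebra.
Import Order.TTheory GRing.Theory Num.Theory.
Local Open Scope ring_scope.

(* The weights 1 / (|I| binom(n,|I|)) sum to H_n: each of the binom(n,k)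
   coalitions of size k contributes 1 / (k binom(n,k)).  Since every coalition
   cost C(U_{i in I} S_i) is at most C(S) by monotonicity, P_C(S) is at most
   H_n C(S). *)

Lemma sum_set_card (T : finType) (V : nmodType) (F : nat -> V) :
  \sum_(I : {set T}) F #|I| = \sum_(k < #|T|.+1) F k *+ 'C(#|T|, k).
Proof.
have card_small (I : {set T}) : (#|I| < #|T|.+1)%N by rewrite ltnS max_card.
rewrite (partition_big (fun I => Ordinal (card_small I)) predT) //=.
apply: eq_bigr => k _.
rewrite -card_draws -sumr_const; apply: eq_big => [I | I /eqP <-] //.
by rewrite inE.
Qed.

(* For I = set0 the weight is 0^-1 = 0, so the restriction I != set0 can be
   dropped. *)
Lemma sum_potential_weights (R : realFieldType) (n : nat) :
  \sum_(I : {set 'I_n} | I != set0) (((#|I| * 'C(n, #|I|))%N)%:R : R)^-1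
  = harmonic R n.
Proof.
set w := fun k => (((k * 'C(n, k))%N)%:R : R)^-1.
have -> : \sum_(I : {set 'I_n} | I != set0) w #|I| = \sum_(I : {set 'I_n}) w #|I|.
  by rewrite [RHS](bigD1 set0) //= /w cards0 mul0n invr0 add0r.
rewrite sum_set_card card_ord /harmonic big_add1 /= big_mkord big_ord_recl.
rewrite /w mul0n invr0 mul0rn add0r; apply: eq_bigr => k _.
have binom_neq0 : ('C(n, k.+1)%:R : R) != 0.
  by rewrite pnatr_eq0 -lt0n bin_gt0 ltn_ord.
by rewrite natrM invfM -[_ *+ _]mulr_natr -mulrA mulVf ?mulr1.
Qed.

Lemma subset_alloc_set (M : finType) (n : nat) (S : 'I_n -> {set M})
  (I : {set 'I_n}) :
  \bigcup_(i in I) S i \subset alloc_set S.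
Proof. by apply/bigcupsP => i _; apply: bigcup_sup. Qed.

Theorem claim3p4 (R : realFieldType) (M : finType) (n : nat)
  (owner : M -> 'I_n) (C : {set M} -> R)
  (Cnonneg : cost_nonneg C) (Cmono : cost_monotone C) (Cnorm : cost_normalized C)
  (S : 'I_n -> {set M}) (HS : is_allocation owner S) :
  potential C S <= harmonic R n * C (alloc_set S).
Proof.
rewrite -sum_potential_weights mulr_suml /potential; apply: ler_sum => I _.
rewrite [leRHS]mulrC ler_wpM2r ?invr_ge0 ?ler0n //.
exact/Cmono/subset_alloc_set.
Qed.
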